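(* Let $\mathcal S$ be a finite set, let $\kappa$ be a real symmetric $\mathcal S\times\mathcal S$ matrix with nonnegative entries, and let $\mu,c\in(0,\infty)^{\mathcal S}$ with $c_i<\mu_i$ for all $i$. Assume $D_c^{-1}-\kappa$ is positive definite, and set $\Phi=(D_c^{-1}-\kappa)^{-1}$, \[ A_0=(I-\kappa D_c)\,D_{\mu-c}^{-1}\,(I-D_\mu\kappa),\qquad A=\tfrac12(A_0+A_0^T). \] Assume $|c|-\tfrac12\langle c,\kappa c\rangle>0$ and that the matrix $\Phi-\frac{cc^T}{|c|-\frac12\langle c,\kappa c\rangle}$ is positive definite, and let \[ B=\Bigl(\Phi-\frac{cc^T}{|c|-\frac12\langle c,\kappa c\rangle}\Bigr)^{-1}. \] Then $A+B$ is positive definite.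
   Context: For a vector $x\in\mathbb R^{\mathcal S}$, $D_x$ denotes the diagonal matrix with diagonal entries $x_i$; $|c|=\sum_{i\in\mathcal S}c_i$ is the $\ell_1$-norm; $\langle\cdot,\cdot\rangle$ is the Euclidean inner product; $I$ is the identity matrix. *)

From mathcomp Require Import all_boot all_order all_algebra.
Set Implicit Arguments. Unset Strict Implicit. Unset Printing Implicit Defensive.
Import Order.TTheory GRing.Theory Num.Theory.
Local Open Scope ring_scope.

(* The finite index set S is represented by 'I_n. *)

Definition Dg (R : ringType) (n : nat) (x : 'cV[R]_n) : 'M[R]_n :=
  \matrix_(i, j) (x i 0 *+ (i == j)).

Definition l1 (R : numDomainType) (n : nat) (x : 'cV[R]_n) : R :=
  \sum_i `|x i 0|.

Definition inner (R : ringType) (n : nat) (x y : 'cV[R]_n) : R :=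
  \sum_i x i 0 * y i 0.

Definition posdef (R : numDomainType) (n : nat) (M : 'M[R]_n) : Prop :=
  M^T = M /\ forall x : 'cV[R]_n, x != 0 -> 0 < (x^T *m M *m x) 0 0.

From mathcomp Require Import all_boot all_order all_algebra.
From mathcomp Require Import ring lra.
Import Order.TTheory GRing.Theory Num.Theory.
Local Open Scope ring_scope.

Set Implicit Arguments. Unset Strict Implicit. Unset Printing Implicit Defensive.

(* Write P = D_c^-1 - kappa, so that Phi = P^-1. Expanding the product,
   A0 = P D_g P - P with g_i = (c_i^-1 - mu_i^-1)^-1 > 0; A0 is symmetric, so
   A = A0. By Sherman-Morrison, B = P + (P c)(P c)^T / s with
   s = q - <c, P c> = <c, kappa c> / 2 >= 0, and s <> 0 since otherwise
   Phi - c c^T / q would annihilate P c. Hence A + B = P D_g P + (P c)(P c)^T / s,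
   a congruent copy of the positive definite D_g plus a positive semidefinite
   rank-one matrix. *)

Section DiagonalMatrices.
Variables (R : comNzRingType) (n : nat).

Lemma Dg_diag_mx (x : 'cV[R]_n) : Dg x = diag_mx x^T.
Proof. by apply/matrixP=> i j; rewrite !mxE. Qed.

Lemma trmx_Dg (x : 'cV[R]_n) : (Dg x)^T = Dg x.
Proof. by rewrite Dg_diag_mx tr_diag_mx. Qed.

Lemma mul_Dg_mx m (x : 'cV[R]_n) (M : 'M[R]_(n, m)) :
  Dg x *m M = \matrix_(i, j) (x i 0 * M i j).
Proof. by apply/matrixP=> i j; rewrite Dg_diag_mx mul_diag_mx !mxE. Qed.

Lemma mul_mx_Dg m (x : 'cV[R]_n) (M : 'M[R]_(m, n)) :
  M *m Dg x = \matrix_(i, j) (M i j * x j 0).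
Proof. by apply/matrixP=> i j; rewrite Dg_diag_mx mul_mx_diag !mxE. Qed.

End DiagonalMatrices.

Section FactorA0.
Variables (F : fieldType) (n : nat) (kappa : 'M[F]_n) (mu c : 'cV[F]_n).
Hypotheses (c_neq0 : forall i, c i 0 != 0) (mu_neq_c : forall i, mu i 0 != c i 0).

Local Notation Dinv x := (Dg (map_mx (fun t => t^-1) x)).
Local Notation P := (Dinv c - kappa).

(* [inv_gap]_i = (c_i^-1 - mu_i^-1)^-1 *)
Definition inv_gap : 'cV[F]_n := \col_i (c i 0 * mu i 0 / (mu i 0 - c i 0)).

Lemma one_sub_mulmx_Dg : 1%:M - kappa *m Dg c = P *m Dg c.
Proof.
rewrite mulmxBl; congr (_ - _); apply/matrixP=> i j.
rewrite mul_mx_Dg !mxE; have [<-|_] := eqVneq i j; last by rewrite !mulr0n mul0r.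
by rewrite !mulr1n mulVf.
Qed.

Lemma Dg_mulmx_one_sub :
  Dg c *m (Dinv (mu - c) *m (1%:M - Dg mu *m kappa)) = Dg inv_gap *m P - 1%:M.
Proof.
apply/matrixP=> i j; rewrite !mul_Dg_mx !mxE.
have mu_sub_c : mu i 0 - c i 0 != 0 by rewrite subr_eq0.
by have [<-|_] := eqVneq i j; rewrite ?mulr1n ?mulr0n; field; rewrite ?c_neq0.
Qed.

Lemma A0_factor :
  (1%:M - kappa *m Dg c) *m Dinv (mu - c) *m (1%:M - Dg mu *m kappa)
  = P *m Dg inv_gap *m P - P.
Proof. by rewrite one_sub_mulmx_Dg -!mulmxA Dg_mulmx_one_sub mulmxBr mulmx1 !mulmxA. Qed.

End FactorA0.

Section ShermanMorrison.
Variables (F : fieldType) (n : nat) (P : 'M[F]_n) (c : 'cV[F]_n) (q : F).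
Hypothesis P_unit : P \in unitmx.

Let t := (c^T *m P *m c) 0 0.

Lemma rank1_update_mulmx :
  (invmx P - q^-1 *: (c *m c^T)) *m (P *m c) = (1 - q^-1 * t) *: c.
Proof.
rewrite mulmxBl mulmxA mulVmx // mul1mx -scalemxAl -(mulmxA c) (mulmxA c^T).
by rewrite [c^T *m P *m c]mx11_scalar mul_mx_scalar scalerA scalerBl scale1r.
Qed.

Lemma invmx_rank1_update : q != 0 -> q - t != 0 ->
  invmx (invmx P - q^-1 *: (c *m c^T))
  = P + (q - t)^-1 *: (P *m c *m (c^T *m P)).
Proof.
move=> q_neq0 s_neq0; set N := invmx P - _; set C := P + _.
have NC : N *m C = 1%:M.
  rewrite mulmxDr -scalemxAr (mulmxA N (P *m c)) rank1_update_mulmx -scalemxAl.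
  rewrite mulmxBl mulVmx // -scalemxAl -mulmxA scalerA -scaleNr addrAC -addrA.
  rewrite -scalerDl.
  have -> : (q - t)^-1 * (1 - q^-1 * t) - q^-1 = 0 by field; rewrite q_neq0.
  by rewrite scale0r addr0.
have N_unit : N \in unitmx by case: (mulmx1_unit NC).
by rewrite -[invmx N]mulmx1 -NC mulmxA mulVmx // mul1mx.
Qed.

End ShermanMorrison.

Section QuadraticForms.
Variables (R : realFieldType) (n : nat).

Definition qform (M : 'M[R]_n) (x : 'cV[R]_n) : R := (x^T *m M *m x) 0 0.

Lemma qformD (M N : 'M[R]_n) x : qform (M + N) x = qform M x + qform N x.
Proof. by rewrite /qform mulmxDr mulmxDl mxE. Qed.

Lemma qformB (M N : 'M[R]_n) x : qform (M - N) x = qform M x - qform N x.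
Proof. by rewrite /qform mulmxBr mulmxBl !mxE. Qed.

Lemma qformZ a (M : 'M[R]_n) x : qform (a *: M) x = a * qform M x.
Proof. by rewrite /qform -scalemxAr -scalemxAl mxE. Qed.

Lemma qform_congr (P M : 'M[R]_n) x : qform (P^T *m M *m P) x = qform M (P *m x).
Proof. by rewrite /qform trmx_mul !mulmxA. Qed.

Lemma qform_outer (v x : 'cV[R]_n) : qform (v *m v^T) x = (v^T *m x) 0 0 ^+ 2.
Proof.
rewrite /qform mulmxA -mulmxA.
have -> : x^T *m v = (v^T *m x)^T by rewrite trmx_mul trmxK.
by rewrite mxE big_ord1 mxE expr2.
Qed.

Lemma qform_Dg (g y : 'cV[R]_n) : qform (Dg g) y = \sum_i g i 0 * y i 0 ^+ 2.
Proof. by rewrite /qform mxE; apply: eq_bigr => i _; rewrite mul_mx_Dg !mxE; ring. Qed.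

Lemma posdef_unitmx (M : 'M[R]_n) : posdef M -> M \in unitmx.
Proof.
move=> [_ M_pos]; rewrite unitmxE unitfE; apply/negP => /det0P [v v_neq0 vM].
have /M_pos : v^T != 0 by rewrite trmx_eq0.
by rewrite trmxK vM mul0mx mxE ltxx.
Qed.

Lemma posdef_mulmx_neq0 (M : 'M[R]_n) (x : 'cV[R]_n) : posdef M -> x != 0 -> M *m x != 0.
Proof.
move=> [_ M_pos] /M_pos x_pos; apply/eqP => Mx0.
by move: x_pos; rewrite -mulmxA Mx0 mulmx0 mxE ltxx.
Qed.

Lemma posdef_Dg (g : 'cV[R]_n) : (forall i, 0 < g i 0) -> posdef (Dg g).
Proof.
move=> g_gt0; split; first exact: trmx_Dg.
move=> y /matrix0Pn [i [j yi_neq0]]; rewrite (ord1 j) in yi_neq0.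
have yi2_gt0 : 0 < y i 0 ^+ 2 by rewrite exprn_even_gt0.
rewrite -[_ 0 0]/(qform _ _) qform_Dg (bigD1 i) //= ltr_pwDl //; first exact: mulr_gt0.
by apply: sumr_ge0 => k _; rewrite mulr_ge0 ?sqr_ge0 ?ltW.
Qed.

Lemma posdef_congr (P M : 'M[R]_n) :
  posdef M -> P \in unitmx -> posdef (P^T *m M *m P).
Proof.
move=> [MT M_pos] P_unit; split; first by rewrite !trmx_mul trmxK MT mulmxA.
move=> x x_neq0; rewrite -[_ 0 0]/(qform _ _) qform_congr; apply: M_pos.
by apply: contra x_neq0 => /eqP Px0; rewrite -(mulKmx P_unit x) Px0 mulmx0.
Qed.

Lemma posdefD_psd (M N : 'M[R]_n) :
  posdef M -> N^T = N -> (forall x, 0 <= qform N x) -> posdef (M + N).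
Proof.
move=> [MT M_pos] NT N_ge0; split; first by rewrite linearD /= MT NT.
move=> x x_neq0; rewrite -[_ 0 0]/(qform _ _) qformD.
exact: ltr_pwDl (M_pos x x_neq0) (N_ge0 x).
Qed.

Lemma half_addmx_tr (M : 'M[R]_n) : M^T = M -> 2^-1 *: (M + M^T) = M.
Proof. by move->; rewrite -mulr2n -scaler_nat scalerA mulVf ?scale1r // pnatr_eq0. Qed.

Lemma posdef_rank1_update_neq0 (P : 'M[R]_n) c q :
  P \in unitmx -> q != 0 -> c != 0 ->
  posdef (invmx P - q^-1 *: (c *m c^T)) -> q - qform P c != 0.
Proof.
move=> P_unit q_neq0 c_neq0 /posdef_mulmx_neq0 N_pos.
have Pc_neq0 : P *m c != 0.
  by apply: contra c_neq0 => /eqP Pc0; rewrite -(mulKmx P_unit c) Pc0 mulmx0.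
move: (N_pos _ Pc_neq0); rewrite rank1_update_mulmx // scaler_eq0 negb_or.
case/andP=> st_neq0 _; apply: contra st_neq0; rewrite subr_eq0 => /eqP qt.
by rewrite -[_ 0 0]/(qform P c) -qt mulVf ?subrr.
Qed.

End QuadraticForms.

Section PositiveData.
Variables (R : realFieldType) (n : nat) (kappa : 'M[R]_n) (mu c : 'cV[R]_n).
Hypotheses (c_gt0 : forall i, 0 < c i 0) (c_lt_mu : forall i, c i 0 < mu i 0).

Lemma qform_Dinv_sub :
  qform (Dg (map_mx (fun t => t^-1) c) - kappa) c = l1 c - inner c (kappa *m c).
Proof.
rewrite qformB qform_Dg; congr (_ - _).
  by apply: eq_bigr => i _; rewrite mxE gtr0_norm // expr2 mulKf ?gt_eqF.
by rewrite /qform -mulmxA mxE; apply: eq_bigr => i _; rewrite !mxE.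
Qed.

Lemma inner_mulmx_ge0 : (forall i j, 0 <= kappa i j) -> 0 <= inner c (kappa *m c).
Proof.
rewrite /inner => kappa_ge0; apply: sumr_ge0 => i _; apply: mulr_ge0; first exact: ltW.
by rewrite mxE; apply: sumr_ge0 => j _; exact: mulr_ge0 (kappa_ge0 i j) (ltW (c_gt0 j)).
Qed.

Lemma inv_gap_gt0 i : 0 < inv_gap mu c i 0.
Proof.
have mu_gt0 := lt_trans (c_gt0 i) (c_lt_mu i).
by rewrite mxE divr_gt0 ?subr_gt0 // mulr_gt0.
Qed.

End PositiveData.

Theorem mainTheorem4 (R : realFieldType) (n : nat)
  (kappa : 'M[R]_n) (mu c : 'cV[R]_n) :
  kappa^T = kappa ->
  (forall i j, 0 <= kappa i j) ->
  (forall i, 0 < mu i 0) -> (forall i, 0 < c i 0) ->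
  (forall i, c i 0 < mu i 0) ->
  let Dcinv := Dg (map_mx (fun t => t^-1) c) in
  posdef (Dcinv - kappa) ->
  let Phi := invmx (Dcinv - kappa) in
  let A0 := (1%:M - kappa *m Dg c) *m Dg (map_mx (fun t => t^-1) (mu - c))
            *m (1%:M - Dg mu *m kappa) in
  let A := 2^-1 *: (A0 + A0^T) in
  let q := l1 c - 2^-1 * inner c (kappa *m c) in
  0 < q ->
  posdef (Phi - q^-1 *: (c *m c^T)) ->
  let B := invmx (Phi - q^-1 *: (c *m c^T)) in
  posdef (A + B).
Proof.
(* The symmetry of kappa and the positivity of mu follow from the other hypotheses. *)
move=> _ kappa_ge0 _ c_gt0 c_lt_mu Dcinv; set P := Dcinv - kappa.
move=> P_pos Phi A0 A q q_gt0 N_pos B.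
have P_unit := posdef_unitmx P_pos; have [PT _] := P_pos.
have c_neq0 : c != 0.
  apply: contraTneq q_gt0 => c0.
  by rewrite /q /l1 /inner c0 !big1 => [|i _|i _]; rewrite ?mxE ?normr0 ?mul0r ?mulr0 ?subr0 ?ltxx.
set s := q - qform P c.
have s_gt0 : 0 < s.
  have s_neq0 := posdef_rank1_update_neq0 P_unit (lt0r_neq0 q_gt0) c_neq0 N_pos.
  rewrite lt_def s_neq0 /s qform_Dinv_sub // /q.
  by have := inner_mulmx_ge0 c_gt0 kappa_ge0; lra.
have A0_eq : A0 = P *m Dg (inv_gap mu c) *m P - P.
  by rewrite /A0 A0_factor // => i; rewrite gt_eqF.
have A0T : A0^T = A0 by rewrite A0_eq linearB /= !trmx_mul trmx_Dg PT mulmxA.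
have B_eq : B = P + s^-1 *: (P *m c *m (P *m c)^T).
  by rewrite /B invmx_rank1_update ?gt_eqF // [(P *m c)^T]trmx_mul PT.
rewrite /A half_addmx_tr // A0_eq B_eq addrA subrK; apply: posdefD_psd.
- by rewrite -{1}PT; apply: posdef_congr => //; apply: posdef_Dg; apply: inv_gap_gt0.
- by rewrite linearZ /= trmx_mul trmxK.
- by move=> x; rewrite qformZ qform_outer mulr_ge0 ?sqr_ge0 // invr_ge0 ltW.
Qed.
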